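(* Let $n=2k+1\geq 5$ be an odd integer. Then $\beta_1^s(J_n)\leq 6$.
   Context: Flower snark $J_n$ ($n\geq 5$ odd): take $n$ disjoint stars $K_{1,3}$, the $i$th with vertices $T_i=\{a_i,b_i,c_i,d_i\}$, centre $b_i$ and leaves $a_i,c_i,d_i$; add the cycle $a_1a_2\cdots a_na_1$ and the cycle $c_1c_2\cdots c_nd_1d_2\cdots d_nc_1$. $d$ is the shortest-path distance, $d(s,X)=\min_{x\in X}d(s,x)$ for nonempty $X$, $\mathcal{D}_S(X)=(d(s_1,X),\dots,d(s_k,X))$. $S$ is a $1$-solid-resolving set if $\mathcal{D}_S(X)\neq\mathcal{D}_S(Y)$ for all distinct nonempty vertex sets $X,Y$ with $|X|\leq 1$ ($Y$ of arbitrary size); $\beta_1^s(J_n)$ is the minimum size of such a set. *)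

From mathcomp Require Import all_boot.
Set Implicit Arguments. Unset Strict Implicit. Unset Printing Implicit Defensive.

(* Vertices of the flower snark J_n: (i, t) with i : 'I_n (0-indexed star
   number) and t : 'I_4 the role: 0 = a_i, 1 = b_i (centre), 2 = c_i, 3 = d_i. *)
Definition fvert (n : nat) := ('I_n * 'I_4)%type.

Definition fsnark_arc (n : nat) (u v : fvert n) : bool :=
  let i := nat_of_ord u.1 in let t := nat_of_ord u.2 in
  let j := nat_of_ord v.1 in let s := nat_of_ord v.2 in
  [||
      [&& t == 1, (s == 0) || (s == 2) || (s == 3) & j == i],
      [&& t == 0, s == 0 & j == (i.+1 %% n)],
      (* big cycle c_1 ... c_n d_1 ... d_n c_1 *)
      [&& t == 2, s == 2, i.+1 < n & j == i.+1],
      [&& t == 2, s == 3, i == n.-1 & j == 0],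
      [&& t == 3, s == 3, i.+1 < n & j == i.+1]
    | [&& t == 3, s == 2, i == n.-1 & j == 0] ].

Definition fsnark_adj (n : nat) : rel (fvert n) :=
  fun u v => fsnark_arc u v || fsnark_arc v u.

(* Shortest-path distance: least k such that a walk of length k from x to y
   exists (defaulting to #|V| if none, which never happens in J_n). *)
Definition fdist (n : nat) (x y : fvert n) : nat :=
  \big[minn/#|{: fvert n}|]_(k < #|{: fvert n}| |
      [exists p : k.-tuple (fvert n), path (@fsnark_adj n) x p && (last x p == y)])
    (k : nat).

(* d(s, X) = min_{x in X} d(s, x) (used only for nonempty X). *)
Definition fdistset (n : nat) (s : fvert n) (X : {set fvert n}) : nat :=
  \big[minn/#|{: fvert n}|]_(x in X) fdist s x.

Definition one_solid_resolving (n : nat) (S : {set fvert n}) : bool :=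
  [forall X : {set fvert n}, forall Y : {set fvert n},
    [&& X != set0, Y != set0, X != Y & #|X| <= 1] ==>
    [exists s in S, fdistset s X != fdistset s Y]].

Definition beta1s (n : nat) : nat :=
  \big[minn/#|{: fvert n}|]_(S : {set fvert n} |
      one_solid_resolving S) #|S|.

(* The landmark set is {a_0, b_0, c_0, a_k, d_k, c_(k+1)}.  A set S is
   1-solid-resolving as soon as, for all distinct vertices x and y, some s in S
   is strictly closer to y than to x: then d(s, Y) <= d(s, y) < d(s, x) for any
   Y containing y.  Distances from each landmark are computed exactly from a
   potential that vanishes only at the source, grows by at most one along edges
   and drops by exactly one along some edge at every other vertex.  For
   n = 2k + 1 the resulting closed forms show that the distance vector of a
   vertex to the six landmarks never dominates that of another vertex. *)

From mathcomp Require Import all_boot all_order zify.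

Set Implicit Arguments.
Unset Strict Implicit.
Unset Printing Implicit Defensive.

Import Order.TTheory.

Section WalkDistance.
Variables (T : finType) (e : rel T).

Definition walk_dist (x y : T) : nat :=
  \big[minn/#|T|]_(k < #|T| | [exists p : k.-tuple T, path e x p && (last x p == y)])
    (k : nat).

Lemma walk_dist_le_card x y : walk_dist x y <= #|T|.
Proof. by rewrite /walk_dist -minEnat -leEnat bigmin_le_id. Qed.

Lemma walk_dist_le_size x p :
  size p < #|T| -> path e x p -> walk_dist x (last x p) <= size p.
Proof.
move=> p_small e_p; rewrite /walk_dist -minEnat -leEnat.
apply: (@bigmin_le_cond _ _ _ _ (Ordinal p_small)) => /=.
by apply/existsP; exists (in_tuple p); rewrite e_p eqxx.
Qed.

Section Potential.
Variable f : T -> nat.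
Hypothesis f_lipschitz : forall u v, e u v -> f v <= (f u).+1.

Lemma potential_last x p : path e x p -> f (last x p) <= f x + size p.
Proof.
elim: p x => [|y p IHp] x /=; first by rewrite addn0.
by case/andP=> /f_lipschitz e_xy /IHp; lia.
Qed.

Lemma potential_le_walk_dist x y : f x = 0 -> f y <= #|T| -> f y <= walk_dist x y.
Proof.
move=> fx0 fy_le; rewrite /walk_dist -minEnat -leEnat.
apply/bigmin_geP; split=> // i /existsP[p /andP[e_p /eqP <-]].
by have := potential_last e_p; rewrite fx0 size_tuple.
Qed.

End Potential.

Lemma descending_path (f : T -> nat) x :
    (forall y, f y = 0 -> y = x) ->
    (forall y, 0 < f y -> exists2 z, e z y & (f z).+1 = f y) ->
  forall y, exists p, [/\ size p = f y, path e x p & last x p = y].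
Proof.
move=> f0 f_desc y; have [d fy] : exists d, f y = d by exists (f y).
elim: d y fy => [|d IHd] y fy.
  by exists [::]; rewrite fy (f0 y fy).
have [|z e_zy fz] := f_desc y; first by rewrite fy.
have [p [size_p e_p last_p]] : exists p, [/\ size p = f z, path e x p & last x p = z].
  by apply: IHd; move: fz; rewrite fy => -[].
exists (rcons p y); rewrite size_rcons rcons_path last_rcons last_p e_p e_zy.
by rewrite size_p -fz.
Qed.

Lemma walk_distE (f : T -> nat) x :
    f x = 0 -> (forall y, f y = 0 -> y = x) ->
    (forall u v, e u v -> f v <= (f u).+1) ->
    (forall y, 0 < f y -> exists2 z, e z y & (f z).+1 = f y) ->
    (forall y, f y < #|T|) ->
  forall y, walk_dist x y = f y.
Proof.
move=> fx0 f0 f_lip f_desc f_small y; apply/eqP; rewrite eqn_leq.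
rewrite (@potential_le_walk_dist f f_lip) ?andbT //; last exact: ltnW.
have [p [size_p e_p last_p]] := descending_path f0 f_desc y.
by rewrite -size_p -{1}last_p walk_dist_le_size // size_p.
Qed.

End WalkDistance.

Lemma fdistE n : @fdist n = walk_dist (@fsnark_adj n).
Proof. by []. Qed.

Section SolidResolving.
Variable n : nat.
Implicit Types (S X Y : {set fvert n}) (s x y : fvert n).

Lemma fdistset_le s Y y : y \in Y -> fdistset s Y <= fdist s y.
Proof. by move=> Yy; rewrite /fdistset -minEnat -leEnat bigmin_le_cond. Qed.

Lemma fdistset1 s x : fdistset s [set x] = fdist s x.
Proof.
apply/eqP; rewrite eqn_leq fdistset_le ?set11 //= /fdistset -minEnat -leEnat.
apply/bigmin_geP; split=> [|z /set1P -> //]; exact: walk_dist_le_card.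
Qed.

Lemma one_solid_resolving_closer S :
    (forall x y, x != y -> exists2 s, s \in S & fdist s y < fdist s x) ->
  one_solid_resolving S.
Proof.
move=> closer; apply/forallP=> X; apply/forallP=> Y.
apply/implyP=> /and4P[X0 Y0 neq_XY card_X].
have [x X_x] : exists x, X = [set x] by apply/cards1P; rewrite eqn_leq card_X card_gt0.
rewrite {}X_x {X X0 card_X} in neq_XY *.
have [y Yy neq_yx] : exists2 y, y \in Y & y != x.
  apply/exists_inP; apply: contraNT neq_XY => /exists_inPn Y_x.
  have [w Yw] := set0Pn _ Y0; have /negbNE/eqP w_x := Y_x w Yw.
  apply/eqP/setP=> z; rewrite inE; apply/eqP/idP => [-> | /Y_x/negbNE/eqP //].
  by rewrite -w_x.
have [|s Ss lt_s] := closer x y; first by rewrite eq_sym.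
apply/exists_inP; exists s => //; rewrite fdistset1.
by apply: contraTneq lt_s => ->; rewrite -leqNgt fdistset_le.
Qed.

Lemma beta1s_le_card S : one_solid_resolving S -> beta1s n <= #|S|.
Proof. by move=> resS; rewrite /beta1s -minEnat -leEnat bigmin_le_cond. Qed.

End SolidResolving.

(* Splitting innermost conditionals first keeps every branch condition
   if-free, so lia can discard infeasible branches as soon as they appear. *)
Ltac case_innermost_if :=
  match goal with
  | |- context[if ?c then _ else _] =>
      lazymatch c with context[if _ then _ else _] => fail | _ => idtac end;
      case: (boolP c) => /= ?
  end.

Ltac case_ifs := repeat (case_innermost_if; try (exfalso; lia)).

Ltac case_role t := case: t => [|[|[|[|t]]]] //= _.

Definition cycle_succ (M x : nat) := if x.+1 < M then x.+1 else 0.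
Definition cycle_pred (M x : nat) := if x == 0 then M.-1 else x.-1.

(* The inner cycle c_0 ... c_(n-1) d_0 ... d_(n-1) is numbered 0 ... 2n-1:
   c_j sits at position j and d_j at position n + j. *)
Definition inner_pos (n j t : nat) := if t == 3 then n + j else j.
Definition inner_index (n r : nat) := if r < n then r else r - n.
Definition inner_role (n r : nat) := if r < n then 2 else 3.

Section FlowerSnarkCoordinates.
Variable m : nat.
Local Notation n := m.+1.

Definition snark_arc (i t j s : nat) : bool :=
  [|| [&& t == 1, (s == 0) || (s == 2) || (s == 3) & j == i],
      [&& t == 0, s == 0 & j == cycle_succ n i],
      [&& t == 2, s == 2, i.+1 < n & j == i.+1],
      [&& t == 2, s == 3, i == n.-1 & j == 0],
      [&& t == 3, s == 3, i.+1 < n & j == i.+1]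
    | [&& t == 3, s == 2, i == n.-1 & j == 0] ].

Definition snark_adj (i t j s : nat) := snark_arc i t j s || snark_arc j s i t.

Lemma succ_modn i : i < n -> i.+1 %% n = cycle_succ n i.
Proof.
rewrite /cycle_succ => lt_in; case: ltnP => [/modn_small // | ge_in].
have -> : i.+1 = n by lia.
by rewrite modnn.
Qed.

Lemma fsnark_adjE (u v : fvert n) : fsnark_adj u v = snark_adj u.1 u.2 v.1 v.2.
Proof. by rewrite /fsnark_adj /fsnark_arc /snark_adj /snark_arc !succ_modn. Qed.

Definition vertex (j t : nat) : fvert n := (inord j, inord t).

Lemma vertex_idx j t : j < n -> (vertex j t).1 = j :> nat.
Proof. exact: inordK. Qed.

Lemma vertex_role j t : t < 4 -> (vertex j t).2 = t :> nat.
Proof. exact: inordK. Qed.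

Lemma vertexE (v : fvert n) : v = vertex v.1 v.2.
Proof. by case: v => j t; rewrite /vertex !inord_val. Qed.

Lemma fdist_vertexE (F : nat -> nat -> nat) i0 t0 :
    i0 < n -> t0 < 4 -> F i0 t0 = 0 ->
    (forall j t, j < n -> t < 4 -> F j t = 0 -> j = i0 /\ t = t0) ->
    (forall i t j s, i < n -> t < 4 -> j < n -> s < 4 ->
       snark_adj i t j s -> F j s <= (F i t).+1) ->
    (forall j t, j < n -> t < 4 -> 0 < F j t ->
       exists j' t', [/\ j' < n, t' < 4, snark_adj j' t' j t & (F j' t').+1 = F j t]) ->
    (forall j t, j < n -> t < 4 -> F j t < n * 4) ->
  forall v : fvert n, fdist (vertex i0 t0) v = F v.1 v.2.
Proof.
move=> lt_i0 lt_t0 F0 F0_eq F_lip F_desc F_small.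
rewrite fdistE; apply: (walk_distE (f := fun v : fvert n => F v.1 v.2)) => /=.
- by rewrite vertex_idx ?vertex_role.
- move=> v /F0_eq[] // <- <-; exact: vertexE.
- by move=> u v; rewrite fsnark_adjE; apply: F_lip.
- move=> v /F_desc[] // j' [t' [lt_j' lt_t' adj desc]].
  exists (vertex j' t'); rewrite ?fsnark_adjE vertex_idx ?vertex_role //.
- by move=> v; rewrite card_prod !card_ord; apply: F_small.
Qed.

Lemma outer_descent (F : nat -> nat -> nat) j : j < n ->
    (F (cycle_succ n j) 0).+1 = F j 0 \/ (F (cycle_pred n j) 0).+1 = F j 0 ->
  exists j' t', [/\ j' < n, t' < 4, snark_adj j' t' j 0 & (F j' t').+1 = F j 0].
Proof.
move=> lt_jn [desc | desc]; [exists (cycle_succ n j) | exists (cycle_pred n j)];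
  exists 0; split=> //; rewrite /snark_adj /snark_arc /cycle_succ /cycle_pred;
  case_ifs; lia.
Qed.

Lemma inner_descent (F : nat -> nat -> nat) j t : j < n -> (t == 2) || (t == 3) ->
    let r := inner_pos n j t in
    let next := cycle_succ (n + n) r in let prev := cycle_pred (n + n) r in
    (F (inner_index n next) (inner_role n next)).+1 = F j t \/
    (F (inner_index n prev) (inner_role n prev)).+1 = F j t ->
  exists j' t', [/\ j' < n, t' < 4, snark_adj j' t' j t & (F j' t').+1 = F j t].
Proof.
move=> lt_jn t23 /= [desc | desc]; (eexists; eexists; split; last exact: desc);
  rewrite /snark_adj /snark_arc /inner_index /inner_role /inner_pos
          /cycle_succ /cycle_pred; case_ifs; lia.
Qed.

End FlowerSnarkCoordinates.

Definition absdiff (x y : nat) := if x <= y then y - x else x - y.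

Definition cycle_dist (M x y : nat) :=
  if absdiff x y + absdiff x y <= M then absdiff x y else M - absdiff x y.

Definition depth (t : nat) := match t with 0 => 0 | 1 => 1 | _ => 2 end.

Definition dist_from_a (n i j t : nat) := cycle_dist n i j + depth t.

Definition dist_from_b (n i j t : nat) :=
  if t == 1 then (if j == i then 0 else cycle_dist n i j + 2) else cycle_dist n i j + 1.

Definition inner_dist (n i t0 j t : nat) :=
  cycle_dist (n + n) (inner_pos n i t0) (inner_pos n j t).

(* From c_i (t0 = 2) or d_i (t0 = 3), an inner vertex is reached either along
   the inner cycle or through b_i and the antipodal vertex (d_i resp. c_i),
   which costs 2 + (n - inner_dist). *)
Definition dist_from_inner (n i t0 j t : nat) :=
  if t == 0 then cycle_dist n i j + 2 else if t == 1 then cycle_dist n i j + 1 else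
  if inner_dist n i t0 j t + inner_dist n i t0 j t <= n + 2 then inner_dist n i t0 j t
  else n + 2 - inner_dist n i t0 j t.

Ltac snark_arith :=
  rewrite /dist_from_a /dist_from_b /dist_from_inner /inner_dist /snark_adj /snark_arc
          /inner_index /inner_role /inner_pos /cycle_succ /cycle_pred /cycle_dist /absdiff /=;
  case_ifs; lia.

Section FlowerSnarkDistances.
Variable m : nat.
Hypothesis m_ge2 : 2 <= m.
Local Notation n := m.+1.

Lemma fdist_from_a i : i < n ->
  forall v : fvert n, fdist (vertex m i 0) v = dist_from_a n i v.1 v.2.
Proof.
move=> lt_in; apply: fdist_vertexE => //.
- snark_arith.
- move=> j t lt_jn; case_role t; snark_arith.
- move=> i' t j s lt_i'n; case_role t => lt_jn; case_role s; snark_arith.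
- move=> j t lt_jn; case_role t => pos.
  + apply: (outer_descent (F := dist_from_a n i)) => //; move: pos; snark_arith.
  + by exists j, 0; split=> //; snark_arith.
  + by exists j, 1; split=> //; snark_arith.
  + by exists j, 1; split=> //; snark_arith.
- move=> j t lt_jn; case_role t; snark_arith.
Qed.

Lemma fdist_from_b i : i < n ->
  forall v : fvert n, fdist (vertex m i 1) v = dist_from_b n i v.1 v.2.
Proof.
move=> lt_in; apply: fdist_vertexE => //.
- by rewrite /dist_from_b !eqxx.
- move=> j t lt_jn; case_role t; snark_arith.
- move=> i' t j s lt_i'n; case_role t => lt_jn; case_role s; snark_arith.
- move=> j t lt_jn; case_role t => pos.
  + have [-> | neq_ji] := eqVneq j i; first by exists i, 1; split=> //; snark_arith.
    apply: (outer_descent (F := dist_from_b n i)) => //; move: pos neq_ji; snark_arith.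
  + by exists j, 0; split=> //; move: pos; snark_arith.
  + have [-> | neq_ji] := eqVneq j i; first by exists i, 1; split=> //; snark_arith.
    apply: (inner_descent (F := dist_from_b n i)) => //; move: pos neq_ji; snark_arith.
  + have [-> | neq_ji] := eqVneq j i; first by exists i, 1; split=> //; snark_arith.
    apply: (inner_descent (F := dist_from_b n i)) => //; move: pos neq_ji; snark_arith.
- move=> j t lt_jn; case_role t; snark_arith.
Qed.

Lemma fdist_from_inner i t0 : i < n -> (t0 == 2) || (t0 == 3) ->
  forall v : fvert n, fdist (vertex m i t0) v = dist_from_inner n i t0 v.1 v.2.
Proof.
move=> lt_in t0_inner; apply: fdist_vertexE => //.
- lia.
- move: t0_inner; snark_arith.
- move=> j t lt_jn; case_role t; move: t0_inner; snark_arith.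
- move=> i' t j s lt_i'n; case_role t => lt_jn; case_role s; move: t0_inner; snark_arith.
- move=> j t lt_jn; case_role t => pos.
  + by exists j, 1; split=> //; snark_arith.
  + have [via_c | via_d] := boolP (inner_dist n i t0 j 2 == cycle_dist n i j).
    * by exists j, 2; split=> //; move: via_c t0_inner; snark_arith.
    * by exists j, 3; split=> //; move: via_d t0_inner; snark_arith.
  + have [near | far] := boolP (inner_dist n i t0 j 2 + inner_dist n i t0 j 2 <= n + 2).
    * apply: (inner_descent (F := dist_from_inner n i t0)) => //.
      by move: pos near t0_inner; snark_arith.
    * by exists j, 1; split=> //; move: far t0_inner; snark_arith.
  + have [near | far] := boolP (inner_dist n i t0 j 3 + inner_dist n i t0 j 3 <= n + 2).
    * apply: (inner_descent (F := dist_from_inner n i t0)) => //.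
      by move: pos near t0_inner; snark_arith.
    * by exists j, 1; split=> //; move: far t0_inner; snark_arith.
- move=> j t lt_jn; case_role t; move: t0_inner; snark_arith.
Qed.

End FlowerSnarkDistances.

Definition cdist0 (k j : nat) := if j <= k then j else 2 * k + 1 - j.
Definition cdistk (k j : nat) := if j <= k then k - j else j - k.
Definition cdistk1 (k j : nat) :=
  if j == 0 then k else if j <= k + 1 then k + 1 - j else j - k - 1.

Definition dist_a0 (k j t : nat) := cdist0 k j + depth t.

Definition dist_b0 (k j t : nat) :=
  match t with 1 => if j == 0 then 0 else cdist0 k j + 2 | _ => cdist0 k j + 1 end.

Definition dist_c0 (k j t : nat) :=
  match t with
  | 0 => cdist0 k j + 2
  | 1 => cdist0 k j + 1
  | 2 => if j <= k.+1 then j else 2 * k + 3 - j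
  | _ => if k <= j then 2 * k + 1 - j else j + 2
  end.

Definition dist_ak (k j t : nat) := cdistk k j + depth t.

Definition dist_dk (k j t : nat) :=
  match t with
  | 0 => cdistk k j + 2
  | 1 => cdistk k j + 1
  | 2 => if j == 0 then k.+1 else if j < k then k + 2 - j
         else if j == 2 * k then k.+1 else j - k + 2
  | _ => cdistk k j
  end.

Definition dist_ck1 (k j t : nat) :=
  match t with
  | 0 => cdistk1 k j + 2
  | 1 => cdistk1 k j + 1
  | 2 => if j <= k.+1 then k.+1 - j else j - k.+1
  | _ => if j == 0 then k else if j == 1 then k.+1
         else if j <= k.+1 then k + 3 - j else j - k + 1
  end.

Ltac landmark_arith :=
  rewrite /dist_a0 /dist_b0 /dist_c0 /dist_ak /dist_dk /dist_ck1 /cdist0 /cdistk /cdistk1;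
  snark_arith.

Section Landmarks.
Variable k : nat.
Hypothesis k_ge2 : 2 <= k.
Local Notation m := (2 * k).
Local Notation n := (2 * k).+1.

Lemma dist_a0E j t : j < n -> t < 4 -> dist_from_a n 0 j t = dist_a0 k j t.
Proof. move=> lt_jn; case_role t; landmark_arith. Qed.

Lemma dist_b0E j t : j < n -> t < 4 -> dist_from_b n 0 j t = dist_b0 k j t.
Proof. move=> lt_jn; case_role t; landmark_arith. Qed.

Lemma dist_c0E j t : j < n -> t < 4 -> dist_from_inner n 0 2 j t = dist_c0 k j t.
Proof. move=> lt_jn; case_role t; landmark_arith. Qed.

Lemma dist_akE j t : j < n -> t < 4 -> dist_from_a n k j t = dist_ak k j t.
Proof. move=> lt_jn; case_role t; landmark_arith. Qed.

Lemma dist_dkE j t : j < n -> t < 4 -> dist_from_inner n k 3 j t = dist_dk k j t.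
Proof. move=> lt_jn; case_role t; landmark_arith. Qed.

Lemma dist_ck1E j t : j < n -> t < 4 -> dist_from_inner n k.+1 2 j t = dist_ck1 k j t.
Proof. move=> lt_jn; case_role t; landmark_arith. Qed.

Lemma landmark_dists_dominated_eq jx tx jy ty :
    jx < n -> jy < n -> tx < 4 -> ty < 4 ->
    dist_a0 k jx tx <= dist_a0 k jy ty -> dist_b0 k jx tx <= dist_b0 k jy ty ->
    dist_c0 k jx tx <= dist_c0 k jy ty -> dist_ak k jx tx <= dist_ak k jy ty ->
    dist_dk k jx tx <= dist_dk k jy ty -> dist_ck1 k jx tx <= dist_ck1 k jy ty ->
  jx = jy /\ tx = ty.
Proof.
(* Each of the 16 role pairs keeps only the landmarks that separate it. *)
move=> lt_jx lt_jy; case_role tx; case_role ty;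
  rewrite /dist_a0 /dist_b0 /dist_c0 /dist_ak /dist_dk /dist_ck1 /cdist0 /cdistk /cdistk1 /=.
- move=> a0 _ _ ak _ ck1; move: a0 ak ck1; case_ifs; lia.
- move=> _ _ c0 _ dk _; move: c0 dk; case_ifs; lia.
- move=> _ b0 _ _ _ ck1; move: b0 ck1; case_ifs; lia.
- move=> _ b0 _ _ dk _; move: b0 dk; case_ifs; lia.
- move=> a0 _ _ ak _ _; move: a0 ak; case_ifs; lia.
- move=> a0 _ _ ak _ ck1; move: a0 ak ck1; case_ifs; lia.
- move=> _ b0 c0 _ _ ck1; move: b0 c0 ck1; case_ifs; lia.
- move=> _ b0 _ _ dk _; move: b0 dk; case_ifs; lia.
- move=> a0 _ _ ak _ _; move: a0 ak; case_ifs; lia.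
- move=> a0 _ _ ak _ _; move: a0 ak; case_ifs; lia.
- move=> a0 _ c0 _ _ ck1; move: a0 c0 ck1; case_ifs; lia.
- move=> a0 _ _ _ dk _; move: a0 dk; case_ifs; lia.
- move=> a0 _ _ ak _ _; move: a0 ak; case_ifs; lia.
- move=> a0 _ _ ak _ _; move: a0 ak; case_ifs; lia.
- move=> a0 _ c0 _ _ ck1; move: a0 c0 ck1; case_ifs; lia.
- move=> a0 _ c0 ak _ _; move: a0 c0 ak; case_ifs; lia.
Qed.

Definition landmarks : {set fvert n} :=
  [set:: [:: vertex m 0 0; vertex m 0 1; vertex m 0 2;
             vertex m k 0; vertex m k 3; vertex m k.+1 2]].

Lemma card_landmarks : #|landmarks| <= 6.
Proof. by rewrite cardsE card_size. Qed.

Lemma landmarks_dominated_eq (x y : fvert n) :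
  (forall s, s \in landmarks -> fdist s x <= fdist s y) -> x = y.
Proof.
have m_ge2 : 2 <= m by lia.
have lt_kn : k < n by lia.
have lt_k1n : k.+1 < n by lia.
move=> dom; have [lt_x1 lt_x2] := (ltn_ord x.1, ltn_ord x.2).
have [lt_y1 lt_y2] := (ltn_ord y.1, ltn_ord y.2).
have := dom (vertex m 0 0); rewrite !fdist_from_a ?dist_a0E ?inE ?eqxx // => /(_ isT) a0.
have := dom (vertex m 0 1); rewrite !fdist_from_b ?dist_b0E ?inE ?eqxx ?orbT // => /(_ isT) b0.
have := dom (vertex m 0 2); rewrite !fdist_from_inner ?dist_c0E ?inE ?eqxx ?orbT // => /(_ isT) c0.
have := dom (vertex m k 0); rewrite !fdist_from_a ?dist_akE ?inE ?eqxx ?orbT // => /(_ isT) ak.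
have := dom (vertex m k 3); rewrite !fdist_from_inner ?dist_dkE ?inE ?eqxx ?orbT // => /(_ isT) dk.
have := dom (vertex m k.+1 2); rewrite !fdist_from_inner ?dist_ck1E ?inE ?eqxx ?orbT // => /(_ isT) ck1.
have [eq1 eq2] := landmark_dists_dominated_eq lt_x1 lt_y1 lt_x2 lt_y2 a0 b0 c0 ak dk ck1.
by rewrite [x]vertexE [y]vertexE eq1 eq2.
Qed.

Lemma landmarks_closer (x y : fvert n) :
  x != y -> exists2 s, s \in landmarks & fdist s y < fdist s x.
Proof.
move=> neq_xy; apply/exists_inP; apply: contraNT neq_xy => /exists_inPn far.
by apply/eqP/landmarks_dominated_eq => s /far; rewrite -leqNgt.
Qed.

End Landmarks.

Theorem mainTheorem18 (k : nat) (hk : 5 <= 2 * k + 1) :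
  beta1s (2 * k + 1) <= 6.
Proof.
have k_ge2 : 2 <= k by lia.
rewrite addn1; apply: leq_trans (card_landmarks k).
by apply/beta1s_le_card/one_solid_resolving_closer/landmarks_closer.
Qed.
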